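(* Let $f:E\to\mathbb{R}$ be $L$-smooth (not necessarily convex) and attain its minimum at $x_*$, and let $\varepsilon>0$. If Algorithm UAGMsDR with accuracy $\varepsilon$ is run for $N\ge1$ steps, then $$\min_{k=0,\dots,N-1}\|\nabla f(y^k)\|_*^2\le\frac{2L(f(x^0)-f(x_* ))}{N}+L\varepsilon.$$
   Context: $E$ is a finite-dimensional real vector space with a norm $\|\cdot\|$; $E^*$ is its dual, $\langle g,x\rangle$ denotes the value of $g\in E^*$ at $x\in E$, and $\|g\|_*=\max\{\langle g,x\rangle:\|x\|\le 1\}$. For $g\in E^*$, $g^{\#}$ denotes a (fixed) element $s\in E$ with $\|s\|\le 1$ and $\langle g,s\rangle=\|g\|_*$. A prox-function $d:E\to\mathbb{R}$ is continuously differentiable, convex, $1$-strongly convex with respect to $\|\cdot\|$ and satisfies $\min_E d=0$; its Bregman divergence is $V(x,z)=d(x)-d(z)-\langle\nabla d(z),x-z\rangle$. $f$ is $L$-smooth if it is continuously differentiable and $\|\nabla f(x)-\nabla f(y)\|_*\le L\|x-y\|$ for all $x,y\in E$. Algorithm UAGMsDR (input $x^0\in E$, accuracy $\varepsilon>0$): set $A_0=0$, $v^0=x^0$, $\psi_0(x)=V(x,x^0)$. For $k=0,1,2,\dots$: 1. Choose $\beta_k\in\arg\min_{\beta\in[0,1]}f(v^k+\beta(x^k-v^k))$, set $y^k=v^k+\beta_k(x^k-v^k)$. 2. $h_{k+1}\in\arg\min_{h\ge0}f(y^k-h(\nabla f(y^k))^{\#})$, $x^{k+1}=y^k-h_{k+1}(\nabla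 f(y^k))^{\#}$; $a_{k+1}$ is the largest solution of $f(y^k)-\frac{a_{k+1}^2}{2(A_k+a_{k+1})}\|\nabla f(y^k)\|_*^2+\frac{\varepsilon a_{k+1}}{2(A_k+a_{k+1})}=f(x^{k+1})$. 3. $A_{k+1}=A_k+a_{k+1}$; $\psi_{k+1}(x)=\psi_k(x)+a_{k+1}\{f(y^k)+\langle\nabla f(y^k),x-y^k\rangle\}$; $v^{k+1}=\arg\min_{x\in E}\psi_{k+1}(x)$. All minima are assumed attained, and $\nabla f(y^k)\ne0$ for all iterations considered. *)

From Stdlib Require Import Reals ClassicalEpsilon.
From mathcomp Require Import ssreflect ssrfun ssrbool eqtype ssrnat seq fintype bigop.
Set Implicit Arguments. Unset Strict Implicit.
Local Open Scope R_scope.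

(* The finite-dimensional space E, realised as R^n (coordinates 'I_n). *)
Definition vec (n : nat) := 'I_n -> R.

Definition vadd {n} (x y : vec n) : vec n := fun i => x i + y i.
Definition vsub {n} (x y : vec n) : vec n := fun i => x i - y i.
Definition vscal {n} (c : R) (x : vec n) : vec n := fun i => c * x i.
Definition vzero {n} : vec n := fun _ => 0.

(* Dual space E^* is identified with R^n; <g, x> is the pairing. *)
Definition pair {n} (g x : vec n) : R := \big[Rplus/0]_(i < n) (g i * x i).

Definition is_norm {n} (nrm : vec n -> R) : Prop :=
  (forall x, 0 <= nrm x) /\
  (forall x, nrm x = 0 -> x = vzero) /\
  (forall c x, nrm (vscal c x) = Rabs c * nrm x) /\
  (forall x y, nrm (vadd x y) <= nrm x + nrm y).

Definition is_dual_norm_value {n} (nrm : vec n -> R) (g : vec n) (r : R) : Prop :=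
  (forall x, nrm x <= 1 -> pair g x <= r) /\
  (exists x, nrm x <= 1 /\ pair g x = r).

Definition dual_norm {n} (nrm : vec n -> R) (g : vec n) : R :=
  epsilon (inhabits 0) (is_dual_norm_value nrm g).

Definition is_sharp_map {n} (nrm : vec n -> R) (sharp : vec n -> vec n) : Prop :=
  forall g, nrm (sharp g) <= 1 /\ pair g (sharp g) = dual_norm nrm g /\
            (forall x, nrm x <= 1 -> pair g x <= pair g (sharp g)).

Definition has_gradient {n} (nrm : vec n -> R) (f : vec n -> R) (gf : vec n -> vec n) : Prop :=
  forall x eps, 0 < eps -> exists delta, 0 < delta /\
    forall h, nrm h < delta ->
      Rabs (f (vadd x h) - f x - pair (gf x) h) <= eps * nrm h.

Definition gradient_continuous {n} (nrm : vec n -> R) (gf : vec n -> vec n) : Prop :=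
  forall x eps, 0 < eps -> exists delta, 0 < delta /\
    forall y, nrm (vsub y x) < delta -> dual_norm nrm (vsub (gf y) (gf x)) < eps.

Definition continuously_differentiable {n} (nrm : vec n -> R) (f : vec n -> R)
  (gf : vec n -> vec n) : Prop :=
  has_gradient nrm f gf /\ gradient_continuous nrm gf.

Definition L_smooth {n} (nrm : vec n -> R) (L : R) (f : vec n -> R) (gf : vec n -> vec n) : Prop :=
  continuously_differentiable nrm f gf /\
  (forall x y, dual_norm nrm (vsub (gf x) (gf y)) <= L * nrm (vsub x y)).

Definition convex {n} (d : vec n -> R) : Prop :=
  forall x y lam, 0 <= lam <= 1 ->
    d (vadd (vscal lam x) (vscal (1 - lam) y)) <= lam * d x + (1 - lam) * d y.

Definition strongly_convex1 {n} (nrm : vec n -> R) (d : vec n -> R) : Prop :=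
  forall x y lam, 0 <= lam <= 1 ->
    d (vadd (vscal lam x) (vscal (1 - lam) y))
      <= lam * d x + (1 - lam) * d y - lam * (1 - lam) / 2 * (nrm (vsub x y)) ^ 2.

Definition prox_function {n} (nrm : vec n -> R) (d : vec n -> R) (gd : vec n -> vec n) : Prop :=
  continuously_differentiable nrm d gd /\ convex d /\ strongly_convex1 nrm d /\
  (forall x, 0 <= d x) /\ (exists x, d x = 0).

Definition bregman {n} (d : vec n -> R) (gd : vec n -> vec n) (x z : vec n) : R :=
  d x - d z - pair (gd z) (vsub x z).

Fixpoint psi {n} (d : vec n -> R) (gd : vec n -> vec n) (f : vec n -> R)
  (gf : vec n -> vec n) (x0 : vec n) (y : nat -> vec n) (a : nat -> R)
  (k : nat) (z : vec n) : R :=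
  match k with
  | O => bregman d gd z x0
  | S k' => psi d gd f gf x0 y a k' z
            + a (S k') * (f (y k') + pair (gf (y k')) (vsub z (y k')))
  end.

(* the equation defining a_{k+1} (the denominator A_k + a must be nonzero) *)
Definition a_equation (Ak G fy fx eps aa : R) : Prop :=
  Ak + aa <> 0 /\
  fy - aa ^ 2 / (2 * (Ak + aa)) * G ^ 2 + eps * aa / (2 * (Ak + aa)) = fx.

Definition UAGMsDR_run {n} (nrm : vec n -> R) (f : vec n -> R) (gf : vec n -> vec n)
  (d : vec n -> R) (gd : vec n -> vec n) (sharp : vec n -> vec n) (eps : R)
  (N : nat) (x y v : nat -> vec n) (beta h a A : nat -> R) : Prop :=
  A 0%nat = 0 /\ v 0%nat = x 0%nat /\
  forall k : nat, (k < N)%N ->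
    (0 <= beta k <= 1 /\
     y k = vadd (v k) (vscal (beta k) (vsub (x k) (v k))) /\
     (forall b, 0 <= b <= 1 -> f (y k) <= f (vadd (v k) (vscal b (vsub (x k) (v k)))))) /\
    (0 <= h (S k) /\
     x (S k) = vsub (y k) (vscal (h (S k)) (sharp (gf (y k)))) /\
     (forall t, 0 <= t -> f (x (S k)) <= f (vsub (y k) (vscal t (sharp (gf (y k)))))) /\
     a_equation (A k) (dual_norm nrm (gf (y k))) (f (y k)) (f (x (S k))) eps (a (S k)) /\
     (forall b, a_equation (A k) (dual_norm nrm (gf (y k))) (f (y k)) (f (x (S k))) eps b ->
                b <= a (S k))) /\
    (A (S k) = A k + a (S k) /\
     (forall z, psi d gd f gf (x 0%nat) y a (S k) (v (S k)) <= psi d gd f gf (x 0%nat) y a (S k) z)).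

From Stdlib Require Import Reals ClassicalEpsilon.
From mathcomp Require Import ssreflect ssrfun ssrbool eqtype ssrnat seq fintype bigop.
From Stdlib Require Import Lra Psatz FunctionalExtensionality Classical.
From Coquelicot Require Import Coquelicot.
Local Open Scope R_scope.

(* The proof only uses that y^k is no worse than x^k (take beta = 1 in step 1)
   and that x^{k+1} is no worse than the step of length ||grad f(y^k)||_* / L
   along -(grad f(y^k))^#.  By the descent lemma for L-smooth functions each
   iteration then decreases f by at least ||grad f(y^k)||_*^2 / (2L), and
   telescoping over N iterations bounds the smallest of these decreases by the
   average (f(x^0) - f(x_* )) / N.  The term L eps is slack. *)

Ltac vec_ring :=
  apply: functional_extensionality => i; rewrite /vadd /vsub /vscal /vzero; ring.

Section DualPairing.

Context {n : nat}.
Implicit Types g u : vec n.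

Lemma pair_scal g u c : pair g (vscal c u) = c * pair g u.
Proof.
rewrite /pair /vscal.
apply: (big_rec2 (fun a b => a = c * b)); first by ring.
by move=> i y1 y2 _ ->; ring.
Qed.

Lemma pair_subl g1 g2 u : pair (vsub g1 g2) u = pair g1 u - pair g2 u.
Proof.
rewrite /pair /vsub.
apply: (big_rec3 (fun a b c => a = b - c)); first by ring.
by move=> i y1 y2 y3 _ ->; ring.
Qed.

Context {nrm : vec n -> R} {sharp : vec n -> vec n}.
Hypotheses (nrmN : is_norm nrm) (sharpP : is_sharp_map nrm sharp).

Lemma nrm_ge0 u : 0 <= nrm u.
Proof. by case: nrmN. Qed.

Lemma nrm_scal c u : nrm (vscal c u) = Rabs c * nrm u.
Proof. by case: nrmN => [_ [_ []]]. Qed.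

Lemma nrm_gt0 u : u <> vzero -> 0 < nrm u.
Proof.
move=> u_nz; case: (Rle_lt_or_eq_dec _ _ (nrm_ge0 u)) => // /esym.
by case: nrmN => [_ [nrm0 _]] /nrm0.
Qed.

Lemma pair_abs_le_dual_norm_unit g u :
  nrm u <= 1 -> Rabs (pair g u) <= dual_norm nrm g.
Proof.
move=> u_le1; have [_ [sharp_eq sharp_max]] := sharpP g.
rewrite -sharp_eq; apply: Rabs_le; split; last exact: sharp_max.
have : nrm (vscal (-1) u) <= 1 by rewrite nrm_scal Rabs_Ropp Rabs_R1; lra.
by move/sharp_max; rewrite pair_scal; lra.
Qed.

Lemma dual_norm_ge0 g : 0 <= dual_norm nrm g.
Proof.
have [s_le1 _] := sharpP g.
have := pair_abs_le_dual_norm_unit g _ s_le1; have := Rabs_pos (pair g (sharp g)); lra.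
Qed.

Lemma pair_abs_le_dual_norm g u : Rabs (pair g u) <= dual_norm nrm g * nrm u.
Proof.
case: (Req_dec (nrm u) 0) => [u0 | u_nz].
  have -> : u = vscal 0 u by case: nrmN => [_ [/(_ u u0) -> _]]; vec_ring.
  rewrite pair_scal Rmult_0_l Rabs_R0.
  by apply: Rmult_le_pos; [apply: dual_norm_ge0 | apply: nrm_ge0].
have u_gt0 : 0 < nrm u by have := nrm_ge0 u; lra.
have unit : nrm (vscal (/ nrm u) u) <= 1.
  by rewrite nrm_scal Rabs_right; [rewrite Rinv_l //; lra | left; apply: Rinv_0_lt_compat].
have := pair_abs_le_dual_norm_unit g _ unit.
rewrite pair_scal Rabs_mult Rabs_right; last by left; apply: Rinv_0_lt_compat.
move=> H; apply: (Rmult_le_reg_r (/ nrm u)); first exact: Rinv_0_lt_compat.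
by rewrite Rmult_assoc Rinv_r // Rmult_1_r Rmult_comm.
Qed.

End DualPairing.

Section Smooth.

Context {n : nat} {nrm : vec n -> R} {sharp : vec n -> vec n}.
Hypotheses (nrmN : is_norm nrm) (sharpP : is_sharp_map nrm sharp).
Context {L : R} {f : vec n -> R} {gf : vec n -> vec n}.

Lemma derivable_pt_lim_along (y u : vec n) tau :
  has_gradient nrm f gf ->
  derivable_pt_lim (fun t => f (vadd y (vscal t u))) tau
                   (pair (gf (vadd y (vscal tau u))) u).
Proof.
move=> grad eps eps_gt0; set z := vadd y (vscal tau u); set w := nrm u + 1.
have nu_ge0 := nrm_ge0 nrmN u.
have w_gt0 : 0 < w by rewrite /w; lra.
have [del [del_gt0 taylor]] := grad z (eps / w) ltac:(exact: Rdiv_lt_0_compat).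
exists (mkposreal _ (Rdiv_lt_0_compat _ _ del_gt0 w_gt0)) => t t_nz /= t_lt.
have -> : vadd y (vscal (tau + t) u) = vadd z (vscal t u) by rewrite /z; vec_ring.
have t_gt0 : 0 < Rabs t by apply: Rabs_pos_lt.
have ntu_lt : nrm (vscal t u) < del.
  have : Rabs t * w < del / w * w by apply: Rmult_lt_compat_r.
  have -> : del / w * w = del by field; lra.
  rewrite nrm_scal // /w; nra.
have := taylor _ ntu_lt; rewrite pair_scal nrm_scal //.
set D := f _ - f z; set P := pair (gf z) u => HD.
have key : eps / w * (Rabs t * nrm u) < eps * Rabs t.
  have -> : eps * Rabs t = eps / w * (Rabs t * w) by field; lra.
  by apply: Rmult_lt_compat_l; [apply: Rdiv_lt_0_compat | rewrite /w; nra].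
have -> : D / t - P = (D - t * P) / t by field.
rewrite Rabs_div //; apply: (Rmult_lt_reg_r (Rabs t)) => //.
have -> : Rabs (D - t * P) / Rabs t * Rabs t = Rabs (D - t * P) by field; lra.
lra.
Qed.

(* The descent lemma, via the mean value theorem applied to
   [t |-> f (y + t u) - t <grad f y, u> - L t^2 ||u||^2 / 2]. *)
Lemma L_smooth_descent (y u : vec n) t :
  L_smooth nrm L f gf -> 0 <= t ->
  f (vadd y (vscal t u)) <= f y + t * pair (gf y) u + L * t ^ 2 / 2 * nrm u ^ 2.
Proof.
move=> [[grad _] lip] t_ge0.
have y0 : vadd y (vscal 0 u) = y by vec_ring.
case: (Req_dec t 0) => [-> | t_nz]; first by rewrite y0; lra.
set phi := fun s => f (vadd y (vscal s u)) - s * pair (gf y) u - L * s ^ 2 / 2 * nrm u ^ 2.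
set phi' := fun s => pair (gf (vadd y (vscal s u))) u - pair (gf y) u - L * s * nrm u ^ 2.
have phi'_phi s : derivable_pt_lim phi s (phi' s).
  apply: derivable_pt_lim_minus; first apply: derivable_pt_lim_minus.
  - exact: derivable_pt_lim_along.
  - by apply/is_derive_Reals; auto_derive; [done | ring].
  - by apply/is_derive_Reals; auto_derive; [done | field].
have [c [mvt [c_gt0 c_lt]]] := MVT_cor2 phi phi' 0 t ltac:(lra) (fun c _ => phi'_phi c).
have phi'_le0 : phi' c <= 0.
  rewrite /phi' -pair_subl.
  have := pair_abs_le_dual_norm nrmN sharpP (vsub (gf (vadd y (vscal c u))) (gf y)) u.
  have := lip (vadd y (vscal c u)) y.
  have -> : vsub (vadd y (vscal c u)) y = vscal c u by vec_ring.
  rewrite nrm_scal // Rabs_right; last lra.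
  have := nrm_ge0 nrmN u; have := Rle_abs (pair (vsub (gf (vadd y (vscal c u))) (gf y)) u).
  nra.
have : phi t <= phi 0 by nra.
rewrite /phi y0; lra.
Qed.

Lemma sharp_step_descent (y : vec n) t :
  L_smooth nrm L f gf -> 0 <= L -> 0 <= t ->
  f (vsub y (vscal t (sharp (gf y)))) <= f y - t * dual_norm nrm (gf y) + L * t ^ 2 / 2.
Proof.
move=> smooth L_ge0 t_ge0; have [s_le1 [s_eq _]] := sharpP (gf y).
set s := sharp (gf y) in s_le1 s_eq *.
have -> : vsub y (vscal t s) = vadd y (vscal t (vscal (-1) s)) by vec_ring.
have := L_smooth_descent y (vscal (-1) s) t smooth t_ge0.
rewrite pair_scal s_eq nrm_scal // Rabs_Ropp Rabs_R1 Rmult_1_l.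
have : nrm s ^ 2 <= 1 by have := nrm_ge0 nrmN s; nra.
have : 0 <= L * t ^ 2 / 2 by apply: Rmult_le_pos; [nra | lra].
nra.
Qed.

Lemma L_smooth_ge0 (u : vec n) : L_smooth nrm L f gf -> u <> vzero -> 0 <= L.
Proof.
move=> [_ lip] u_nz; have := lip u vzero.
have -> : vsub u vzero = u by vec_ring.
have := nrm_gt0 nrmN _ u_nz; have := dual_norm_ge0 nrmN sharpP (vsub (gf u) (gf vzero)).
nra.
Qed.

End Smooth.

Lemma sqr_le_of_quadratic_lower_bound (m u G L : R) :
  0 <= L -> 0 <= G -> (forall t, 0 <= t -> m <= u - t * G + L * t ^ 2 / 2) ->
  G ^ 2 <= 2 * L * (u - m).
Proof.
move=> L_ge0 G_ge0 bound.
have m_le_u : m <= u by have := bound 0 (Rle_refl 0); lra.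
case: (Req_dec L 0) => [L0 | L_nz].
  case: (Rle_lt_or_eq_dec _ _ G_ge0) => [G_gt0 | <-]; last by rewrite L0; nra.
  have t_ge0 : 0 <= (u - m + 1) / G by apply: Rdiv_le_0_compat; lra.
  have := bound _ t_ge0; rewrite L0.
  have -> : (u - m + 1) / G * G = u - m + 1 by field; lra.
  lra.
have := bound (G / L) ltac:(apply: Rdiv_le_0_compat; lra).
have -> : u - G / L * G + L * (G / L) ^ 2 / 2 = u - G ^ 2 / (2 * L) by field.
move=> H; have : G ^ 2 / (2 * L) <= u - m by lra.
by move/(Rmult_le_compat_r (2 * L)); rewrite /Rdiv Rmult_assoc Rinv_l; lra.
Qed.

Lemma exists_le_average_decrease (c u : nat -> R) (m : R) (N : nat) :
  (0 < N)%N -> (forall k, (k < N)%N -> c k <= u k - u k.+1) -> m <= u N ->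
  exists k, (k < N)%N /\ c k <= (u 0%nat - m) / INR N.
Proof.
move=> N_gt0 decr m_le; apply: NNPP => none.
set B := (u 0%nat - m) / INR N.
have c_gt k : (k < N)%N -> B < c k.
  by move=> kN; apply: Rnot_le_lt => c_le; apply: none; exists k.
have u_lt k : (k < N)%N -> u k.+1 < u 0%nat - INR k.+1 * B.
  elim: k => [|k IH] kN.
    by have := decr 0%nat kN; have := c_gt 0%nat kN; rewrite /=; lra.
  by have := IH (ltnW kN); have := decr _ kN; have := c_gt _ kN; rewrite !S_INR; lra.
have := u_lt N.-1; rewrite prednK // => /(_ (leqnn N)).
have -> : INR N * B = u 0%nat - m.
  by rewrite /B; field; apply: not_0_INR; apply/eqP; rewrite -lt0n.
lra.
Qed.

Lemma UAGMsDR_descent {n} {nrm : vec n -> R} {sharp : vec n -> vec n} {L : R}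
    {f : vec n -> R} {gf : vec n -> vec n} {d : vec n -> R} {gd : vec n -> vec n}
    {eps : R} {N : nat} {x y v : nat -> vec n} {beta h a A : nat -> R} {k : nat} :
  is_norm nrm -> is_sharp_map nrm sharp -> L_smooth nrm L f gf -> 0 <= L ->
  UAGMsDR_run nrm f gf d gd sharp eps N x y v beta h a A -> (k < N)%N ->
  forall t, 0 <= t -> f (x k.+1) <= f (x k) - t * dual_norm nrm (gf (y k)) + L * t ^ 2 / 2.
Proof.
move=> nrmN sharpP smooth L_ge0 [_ [_ run]] kN t t_ge0.
have [[_ [_ y_min]] [[_ [_ [x_min _]]] _]] := run k kN.
have := y_min 1 ltac:(lra).
have -> : vadd (v k) (vscal 1 (vsub (x k) (v k))) = x k by vec_ring.
have := x_min t t_ge0; have := sharp_step_descent nrmN sharpP (y k) t smooth L_ge0 t_ge0.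
lra.
Qed.

Theorem mainTheorem11 (n : nat) (nrm : vec n -> R) (sharp : vec n -> vec n)
  (L : R) (f : vec n -> R) (gf : vec n -> vec n) (d : vec n -> R) (gd : vec n -> vec n)
  (xstar : vec n) (eps : R) (N : nat)
  (x y v : nat -> vec n) (beta h a A : nat -> R) :
  is_norm nrm ->
  is_sharp_map nrm sharp ->
  L_smooth nrm L f gf ->
  (forall z, f xstar <= f z) ->
  prox_function nrm d gd ->
  0 < eps ->
  (1 <= N)%N ->
  (forall k : nat, (k < N)%N -> gf (y k) <> vzero) ->
  UAGMsDR_run nrm f gf d gd sharp eps N x y v beta h a A ->
  exists k : nat, (k < N)%N /\
    (dual_norm nrm (gf (y k))) ^ 2
      <= 2 * L * (f (x 0%nat) - f xstar) / INR N + L * eps.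
Proof.
move=> nrmN sharpP smooth f_min _ eps_gt0 N_gt0 grad_nz run.
have L_ge0 : 0 <= L := L_smooth_ge0 nrmN sharpP _ smooth (grad_nz 0%nat N_gt0).
have decr k : (k < N)%N ->
    dual_norm nrm (gf (y k)) ^ 2 <= 2 * L * f (x k) - 2 * L * f (x k.+1).
  move=> kN; rewrite -Rmult_minus_distr_l.
  apply: sqr_le_of_quadratic_lower_bound => //; first exact: dual_norm_ge0.
  exact: UAGMsDR_descent nrmN sharpP smooth L_ge0 run kN.
have [k [kN Gk]] := exists_le_average_decrease _ (fun k => 2 * L * f (x k))
  (2 * L * f xstar) _ N_gt0 decr ltac:(have := f_min (x N); nra).
exists k; split => //; apply: (Rle_trans _ _ _ Gk).
have -> : (2 * L * f (x 0%nat) - 2 * L * f xstar) / INR N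
          = 2 * L * (f (x 0%nat) - f xstar) / INR N.
  by field; apply: not_0_INR; apply/eqP; rewrite -lt0n.
by have := Rmult_le_pos _ _ L_ge0 (Rlt_le _ _ eps_gt0); lra.
Qed.
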